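(* With $\lambda=0$, the ordering $O(n^a,n^b)$ output by the xOrder procedure (defined in the context) maximizes $\mathrm{AUC}^o$ over all cross-group orderings $o$ of $(\mathrm{p}^a,\mathrm{p}^b)$; i.e., it is a global maximizer of $J(o)=\mathrm{AUC}^o-\lambda\Delta\mathrm{xAUC}^o$ for $\lambda=0$.
   Context: Setting: two disjoint finite groups $a,b$ of instances with labels $Y_u\in\{0,1\}$; $n^g,n^g_1,n^g_0$ denote the size, number of positives and number of negatives of group $g$ (all counts $\ge1$); $n_1=n_1^a+n_1^b$, $n_0=n_0^a+n_0^b$, $k_{a,b}=n_1^an_0^b$, $k_{b,a}=n_0^an_1^b$, $k=n_0n_1$. $\mathrm{p}^a=(\mathrm{p}^{a(1)},\dots,\mathrm{p}^{a(n^a)})$ and $\mathrm{p}^b=(\mathrm{p}^{b(1)},\dots,\mathrm{p}^{b(n^b)})$ are fixed orderings of the groups (e.g. by decreasing score). A cross-group ordering is a list of all instances of $a\cup b$ preserving the relative orders within $\mathrm{p}^a$ and within $\mathrm{p}^b$; ''precedes'' means ranked higher. $\mathrm{AUC}^o=\frac{1}{n_1n_0}\#\{(u,v):Y_u=1,Y_v=0,u\text{ precedes }v\text{ in }o\}$; $\mathrm{xAUC}^o(a,b)=\frac{1}{n_1^an_0^b}\#\{(u,v):u\in a,Y_u=1,v\in b,Y_v=0,u\text{ precedes }v\}$, $\mathrm{xAUC}^o(b,a)$ symmetrically; $\Delta\mathrm{xAUC}^o=|\mathrm{xAUC}^o(a,b)-\mathrm{xAUC}^o(b,a)|$. xOrder: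 For $0\le i\le n^a$, $0\le j\le n^b$ and a list $q$ that interleaves $\mathrm{p}^{a(1)},\dots,\mathrm{p}^{a(i)}$ and $\mathrm{p}^{b(1)},\dots,\mathrm{p}^{b(j)}$ preserving within-group orders, let $q^{\to b}$ be $q$ followed by $\mathrm{p}^{b(j+1)},\dots,\mathrm{p}^{b(n^b)}$ and $q^{\to a}$ be $q$ followed by $\mathrm{p}^{a(i+1)},\dots,\mathrm{p}^{a(n^a)}$. Define $A(q)=\frac{1}{n_1^an_0^b}\#\{(u,v): u\in\{\mathrm{p}^{a(1)},..,\mathrm{p}^{a(i)}\},Y_u=1,v\in b,Y_v=0,u\text{ precedes }v\text{ in }q^{\to b}\}$, $B(q)=\frac{1}{n_1^bn_0^a}\#\{(u,v): u\in\{\mathrm{p}^{b(1)},..,\mathrm{p}^{b(j)}\},Y_u=1,v\in a,Y_v=0,u\text{ precedes }v\text{ in }q^{\to a}\}$, and $\widehat G(q)=\frac{k_{a,b}}{k}A(q)+\frac{k_{b,a}}{k}B(q)-\lambda|A(q)-B(q)|$. Set $O(i,0)=(\mathrm{p}^{a(1)},\dots,\mathrm{p}^{a(i)})$ and $O(0,j)=(\mathrm{p}^{b(1)},\dots,\mathrm{p}^{b(j)})$. For $i=1,\dots,n^a$ and $j=1,\dots,n^b$ (in increasing order): if $\widehat G(O(i-1,j)\oplus\mathrm{p}^{a(i)})>\widehat G(O(i,j-1)\oplus\mathrm{p}^{b(j)})$ then $O(i,j)=O(i-1,j)\oplus\mathrm{p}^{a(i)}$, otherwise $O(i,j)=O(i,j-1)\oplus\mathrm{p}^{b(j)}$,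 where $\oplus$ appends an element to the end of a list. The output is $O(n^a,n^b)$, a cross-group ordering. *)

From HB Require Import structures.
From mathcomp Require Import all_boot all_order all_algebra.
Set Implicit Arguments. Unset Strict Implicit. Unset Printing Implicit Defensive.
Import Order.TTheory GRing.Theory Num.Theory.
Local Open Scope ring_scope.

(* An instance is (g, k): g = false for group a, g = true for group b,
   k = 0-based position of the instance in the fixed ordering p^a resp. p^b. *)
Definition inst := (bool * nat)%type.

Section XAUC.
Variables (R : realFieldType) (ya yb : seq bool).

Definition na := size ya.
Definition nb := size yb.
Definition lab (x : inst) : bool := nth false (if x.1 then yb else ya) x.2.

Definition n1a := count id ya.
Definition n0a := count negb ya.
Definition n1b := count id yb.
Definition n0b := count negb yb.
Definition n1 := (n1a + n1b)%N.
Definition n0 := (n0a + n0b)%N.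
Definition kab := (n1a * n0b)%N.
Definition kba := (n0a * n1b)%N.
Definition k := (n0 * n1)%N.

Definition pa (i : nat) : seq inst := [seq (false, t) | t <- iota 0 i].
Definition pb (j : nat) : seq inst := [seq (true, t) | t <- iota 0 j].

Definition is_cross (o : seq inst) : bool :=
  ([seq x <- o | ~~ x.1] == pa na) && ([seq x <- o | x.1] == pb nb).

(* number of pairs (u,v) with P u v and u preceding v (ranked higher) in o *)
Definition npairs (P : inst -> inst -> bool) (o : seq inst) : nat :=
  (\sum_(i < size o) \sum_(j < size o)
     ((i < j) && P (nth (false, 0) o i) (nth (false, 0) o j)))%N.

Definition AUC (o : seq inst) : R :=
  (npairs (fun u v => lab u && ~~ lab v) o)%:R / (n1 * n0)%:R.

Definition xAUC_ab (o : seq inst) : R :=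
  (npairs (fun u v => [&& ~~ u.1, lab u, v.1 & ~~ lab v]) o)%:R / (n1a * n0b)%:R.
Definition xAUC_ba (o : seq inst) : R :=
  (npairs (fun u v => [&& u.1, lab u, ~~ v.1 & ~~ lab v]) o)%:R / (n1b * n0a)%:R.

Definition to_b (q : seq inst) : seq inst :=
  let j := count (fun x : inst => x.1) q in
  q ++ [seq (true, t) | t <- iota j (nb - j)].
Definition to_a (q : seq inst) : seq inst :=
  let i := count (fun x : inst => ~~ x.1) q in
  q ++ [seq (false, t) | t <- iota i (na - i)].

Definition Aq (q : seq inst) : R :=
  (npairs (fun u v => [&& ~~ u.1, lab u, v.1 & ~~ lab v]) (to_b q))%:R
    / (n1a * n0b)%:R.
Definition Bq (q : seq inst) : R :=
  (npairs (fun u v => [&& u.1, lab u, ~~ v.1 & ~~ lab v]) (to_a q))%:R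
    / (n1b * n0a)%:R.

Definition Ghat (lambda : R) (q : seq inst) : R :=
  kab%:R / k%:R * Aq q + kba%:R / k%:R * Bq q - lambda * `|Aq q - Bq q|.

(* O i j, with 0-based indices: p^{a(i)} is (false, i-1) *)
Fixpoint O (lambda : R) (i : nat) : nat -> seq inst :=
  fix Oi (j : nat) : seq inst :=
    match i, j with
    | 0, _ => pb j
    | i'.+1, 0 => pa i
    | i'.+1, j'.+1 =>
        let c1 := rcons (O lambda i' j) (false, i') in
        let c2 := rcons (Oi j') (true, j') in
        if Ghat lambda c2 < Ghat lambda c1 then c1 else c2
    end.

Definition xOrder (lambda : R) : seq inst := O lambda na nb.

End XAUC.

(* The key observation is that [wpos] splits into four weights: cross pairs
   a -> b, cross pairs b -> a, and pairs inside group a resp. group b.  For a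
   list q interleaving the first i items of a with the first j items of b
   (a state (i, j) of the dynamic programme):
   - the within-group pairs of q are fixed by i and j (groups keep their order);
   - the score Ghat 0 q is, up to the positive factor 1/k, the cross-pair count
     of q plus the pairs between q's contents and the appended tails, and the
     latter only depend on i and j.
   Hence on interleavings of the same state, comparing Ghat 0 is comparing the
   AUC numerator [pairs wpos].  Since appending an item adds to [pairs wpos]
   an amount depending only on the contents, optimal substructure holds, and
   induction on (i, j) shows that every O 0 i j maximizes [pairs wpos] among
   all interleavings of the state (i, j). *)

From HB Require Import structures.
From mathcomp Require Import all_boot all_order all_algebra zify ring.
Import Order.TTheory GRing.Theory Num.Theory.
Set Implicit Arguments. Unset Strict Implicit.

Section PairCount.
Variable T : Type.
Implicit Types (w : T -> T -> nat) (s : seq T).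

Fixpoint pairs w s : nat :=
  if s is x :: s' then (\sum_(y <- s') w x y + pairs w s')%N else 0%N.

Lemma pairs_cat w s1 s2 :
  pairs w (s1 ++ s2) =
  (pairs w s1 + \sum_(u <- s1) \sum_(v <- s2) w u v + pairs w s2)%N.
Proof.
elim: s1 => [|x s IH] /=; first by rewrite big_nil.
by rewrite IH big_cat big_cons /=; lia.
Qed.

Lemma pairs_rcons w s x :
  pairs w (rcons s x) = (pairs w s + \sum_(u <- s) w u x)%N.
Proof.
rewrite -cats1 pairs_cat /= big_nil !addn0; congr addn.
by apply: eq_bigr => u _; rewrite big_cons big_nil addn0.
Qed.

Lemma pairsD w1 w2 s :
  pairs (fun u v => w1 u v + w2 u v)%N s = (pairs w1 s + pairs w2 s)%N.
Proof. by elim: s => [|x s IH] //=; rewrite IH big_split /=; lia. Qed.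

Lemma eq_pairs w1 w2 s : w1 =2 w2 -> pairs w1 s = pairs w2 s.
Proof.
move=> E; elim: s => [|x s IH] //=; rewrite IH; congr addn.
by apply: eq_bigr => y _.
Qed.

Lemma pairs_filter w (f : pred T) s :
  (forall u v, ~~ f u -> w u v = 0%N) -> (forall u v, ~~ f v -> w u v = 0%N) ->
  pairs w s = pairs w (filter f s).
Proof.
move=> wl wr; elim: s => [|x s IH] //=.
case: (boolP (f x)) => fx /=; last by rewrite IH big1 // => y _; rewrite wl.
rewrite IH big_filter; congr addn.
rewrite [RHS]big_mkcond /=.
by apply: eq_bigr => y _; case: (boolP (f y)) => // fy; rewrite wr.
Qed.

End PairCount.

Lemma npairsE (P : inst -> inst -> bool) q :
  npairs P q = pairs (fun u v => nat_of_bool (P u v)) q.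
Proof.
elim: q => [|x q IH]; first by rewrite /npairs big_ord0.
rewrite /npairs /= big_ord_recl /= big_ord_recl /= add0n -IH; congr addn.
  rewrite (big_nth (false, 0)) big_mkord; apply: eq_bigr => i _.
  by rewrite add0n.
apply: eq_bigr => i _; rewrite big_ord_recl /= add0n.
by apply: eq_bigr => j _; rewrite /bump /= !add0n add1n.
Qed.

Section Interleavings.
Implicit Types (i j : nat) (q : seq inst).

Definition interleaves i j q : bool :=
  ([seq x <- q | ~~ x.1] == pa i) && ([seq x <- q | x.1] == pb j).

Lemma pa_S i : pa i.+1 = rcons (pa i) (false, i).
Proof. by rewrite /pa -addn1 iotaD map_cat /= cats1. Qed.

Lemma pb_S j : pb j.+1 = rcons (pb j) (true, j).
Proof. by rewrite /pb -addn1 iotaD map_cat /= cats1. Qed.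

Lemma interleaves_perm i j q : interleaves i j q -> perm_eq q (pa i ++ pb j).
Proof.
case/andP=> /eqP <- /eqP <-.
by rewrite perm_sym perm_catC (perm_filterC (fun x : inst => x.1)).
Qed.

Lemma interleaves_count_b i j q :
  interleaves i j q -> count (fun x : inst => x.1) q = j.
Proof. by case/andP=> _ /eqP H; rewrite -size_filter H size_map size_iota. Qed.

Lemma interleaves_count_a i j q :
  interleaves i j q -> count (fun x : inst => ~~ x.1) q = i.
Proof. by case/andP=> /eqP H _; rewrite -size_filter H size_map size_iota. Qed.

Lemma interleaves_rcons_a i j q :
  interleaves i.+1 j (rcons q (false, i)) = interleaves i j q.
Proof. by rewrite /interleaves !filter_rcons /= pa_S eqseq_rcons eqxx andbT. Qed.

Lemma interleaves_rcons_b i j q :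
  interleaves i j.+1 (rcons q (true, j)) = interleaves i j q.
Proof. by rewrite /interleaves !filter_rcons /= pb_S eqseq_rcons eqxx andbT. Qed.

Lemma interleaves_last i j q x : interleaves i j (rcons q x) ->
  (exists2 i', i = i'.+1 & x = (false, i') /\ interleaves i' j q) \/
  (exists2 j', j = j'.+1 & x = (true, j') /\ interleaves i j' q).
Proof.
case: x => [[] t] H.
  right; case: j H => [|j] H.
    by move: H; rewrite /interleaves !filter_rcons /= andbC /pb -size_eq0 size_rcons.
  exists j => //; move: H; rewrite /interleaves !filter_rcons /= pb_S eqseq_rcons.
  by case/andP=> -> /andP [-> /eqP [->]].
left; case: i H => [|i] H.
  by move: H; rewrite /interleaves !filter_rcons /= /pa -size_eq0 size_rcons.
exists i => //; move: H; rewrite /interleaves !filter_rcons /= pa_S eqseq_rcons.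
by case/andP=> /andP [-> /eqP [->]] ->.
Qed.

Lemma interleaves0j j q : interleaves 0 j q -> q = pb j.
Proof.
case/andP=> /eqP Ha /eqP <-; apply/esym/all_filterP/allP => x xq.
apply: contraT => /negbTE bx.
by have := mem_filter (fun x : inst => ~~ x.1) x q; rewrite Ha bx xq.
Qed.

Lemma interleavesi0 i q : interleaves i 0 q -> q = pa i.
Proof.
case/andP=> /eqP <- /eqP Hb; apply/esym/all_filterP/allP => x xq.
apply: contraT; rewrite negbK => bx.
by have := mem_filter (fun x : inst => x.1) x q; rewrite Hb bx xq.
Qed.

Lemma interleaves_pa i : interleaves i 0 (pa i).
Proof.
apply/andP; split; apply/eqP.
  by apply/all_filterP; rewrite /pa all_map; apply/allP.
by rewrite /pa filter_map (@eq_filter _ _ pred0) ?filter_pred0.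
Qed.

Lemma interleaves_pb j : interleaves 0 j (pb j).
Proof.
apply/andP; split; apply/eqP.
  by rewrite /pb filter_map (@eq_filter _ _ pred0) ?filter_pred0.
by apply/all_filterP; rewrite /pb all_map; apply/allP.
Qed.

End Interleavings.

Section Weights.
Variables ya yb : seq bool.
Implicit Types (i j : nat) (q : seq inst).

Definition wpos (u v : inst) : nat := lab ya yb u && ~~ lab ya yb v.

Definition wab (u v : inst) : nat := [&& ~~ u.1, lab ya yb u, v.1 & ~~ lab ya yb v].
Definition wba (u v : inst) : nat := [&& u.1, lab ya yb u, ~~ v.1 & ~~ lab ya yb v].
Definition waa (u v : inst) : nat := [&& ~~ u.1, ~~ v.1, lab ya yb u & ~~ lab ya yb v].
Definition wbb (u v : inst) : nat := [&& u.1, v.1, lab ya yb u & ~~ lab ya yb v].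

Lemma pairs_wpos i j q : interleaves i j q ->
  pairs wpos q =
  (pairs wab q + pairs wba q + pairs waa (pa i) + pairs wbb (pb j))%N.
Proof.
case/andP=> /eqP Ha /eqP Hb.
have wpos_split : wpos =2 (fun u v => wab u v + wba u v + waa u v + wbb u v)%N.
  move=> [[] s] [[] t]; rewrite /wpos /wab /wba /waa /wbb /=;
  by case: (lab ya yb _); case: (lab ya yb _).
rewrite (eq_pairs _ wpos_split) !pairsD -Ha -Hb.
rewrite [pairs waa _](@pairs_filter _ _ (fun x => ~~ x.1)) //; last 2 first.
- by move=> [[] s] v.
- by move=> u [[] s]; rewrite /waa /= ?andbF.
rewrite [pairs wbb _](@pairs_filter _ _ (fun x => x.1)) //.
- by move=> [[] s] v.
- by move=> u [[] s]; rewrite /wbb /= ?andbF.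
Qed.

Lemma pairs_wpos_rcons i j q x : interleaves i j q ->
  pairs wpos (rcons q x) = (pairs wpos q + \sum_(u <- pa i ++ pb j) wpos u x)%N.
Proof. by move=> H; rewrite pairs_rcons (perm_big _ (interleaves_perm H)). Qed.

Definition rest_a i : seq inst := [seq (false, t) | t <- iota i (na ya - i)].
Definition rest_b j : seq inst := [seq (true, t) | t <- iota j (nb yb - j)].

Definition tail_pairs i j : nat :=
  (\sum_(u <- pa i ++ pb j) \sum_(v <- rest_b j) wab u v + pairs wab (rest_b j)
   + \sum_(u <- pa i ++ pb j) \sum_(v <- rest_a i) wba u v + pairs wba (rest_a i))%N.

(* The numerator of the xOrder score Ghat 0 (up to the normalizations). *)
Definition score q : nat := (pairs wab (to_b yb q) + pairs wba (to_a ya q))%N.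

Lemma score_split i j q : interleaves i j q ->
  score q = (pairs wab q + pairs wba q + tail_pairs i j)%N.
Proof.
move=> H; rewrite /score /to_b /to_a (interleaves_count_b H) (interleaves_count_a H).
rewrite -/(rest_b j) -/(rest_a i) !pairs_cat /tail_pairs.
rewrite !(perm_big _ (interleaves_perm H)).
set sb := \sum_(u <- _) \sum_(v <- rest_b j) _.
set sa := \sum_(u <- _) \sum_(v <- rest_a i) _.
lia.
Qed.

Lemma score_ltE i j q1 q2 : interleaves i j q1 -> interleaves i j q2 ->
  (score q1 < score q2)%N = (pairs wpos q1 < pairs wpos q2)%N.
Proof.
move=> H1 H2; rewrite (score_split H1) (score_split H2).
by rewrite (pairs_wpos H1) (pairs_wpos H2); apply/idP/idP; lia.
Qed.

Definition auc_optimal i j q : Prop :=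
  interleaves i j q /\
  forall q', interleaves i j q' -> (pairs wpos q' <= pairs wpos q)%N.

Lemma auc_optimal_step i j q1 q2 :
  auc_optimal i j.+1 q1 -> auc_optimal i.+1 j q2 ->
  let c1 := rcons q1 (false, i) in let c2 := rcons q2 (true, j) in
  auc_optimal i.+1 j.+1 (if (score c2 < score c1)%N then c1 else c2).
Proof.
move=> [ok1 opt1] [ok2 opt2] c1 c2.
have okc1 : interleaves i.+1 j.+1 c1 by rewrite interleaves_rcons_a.
have okc2 : interleaves i.+1 j.+1 c2 by rewrite interleaves_rcons_b.
have bound q : interleaves i.+1 j.+1 q ->
    (pairs wpos q <= maxn (pairs wpos c1) (pairs wpos c2))%N.
  case/lastP: q => [|q x]; first by [].
  rewrite leq_max; case/interleaves_last => [[_ [<-] [-> okq]] | [_ [<-] [-> okq]]].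
    apply/orP; left.
    by rewrite (pairs_wpos_rcons _ okq) (pairs_wpos_rcons _ ok1) leq_add2r opt1.
  apply/orP; right.
  by rewrite (pairs_wpos_rcons _ okq) (pairs_wpos_rcons _ ok2) leq_add2r opt2.
rewrite (score_ltE okc2 okc1).
case: ltnP => cmp; split=> // q /bound /leq_trans; apply.
  by rewrite geq_max leqnn ltnW.
by rewrite geq_max leqnn andbT.
Qed.

End Weights.

Local Open Scope ring_scope.

Section XOrder.
Variables (R : realFieldType) (ya yb : seq bool).
Hypotheses (pos_a : (0 < n1a ya)%N) (neg_a : (0 < n0a ya)%N)
           (pos_b : (0 < n1b yb)%N) (neg_b : (0 < n0b yb)%N).

Lemma Ghat0E q : Ghat ya yb (0 : R) q = (score ya yb q)%:R / (k ya yb)%:R.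
Proof.
rewrite /Ghat /Aq /Bq !npairsE -[pairs _ (to_b _ _)]/(pairs (wab ya yb) (to_b yb q)).
rewrite -[pairs _ (to_a _ _)]/(pairs (wba ya yb) (to_a ya q)) /score.
rewrite /kab /kba /k /n0 /n1 !natrD !natrM mul0r subr0.
have nz n : (0 < n)%N -> n%:R != 0 :> R by rewrite pnatr_eq0 -lt0n.
have nz_n0 := nz _ (ltn_addr (n0b yb) neg_a); have nz_n1 := nz _ (ltn_addr (n1b yb) pos_a).
rewrite !natrD in nz_n0 nz_n1.
by field; rewrite ?nz ?nz_n0 ?nz_n1.
Qed.

Lemma O_auc_optimal i j : auc_optimal ya yb i j (O ya yb (0 : R) i j).
Proof.
elim: i j => [|i IHi] j.
  have -> : O ya yb (0 : R) 0 j = pb j by case: j.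
  by split=> [|q /interleaves0j ->]; [exact: interleaves_pb |].
elim: j => [|j IHj].
  by split=> [|q /interleavesi0 ->]; [exact: interleaves_pa |].
have k_gt0 : 0 < (k ya yb)%:R :> R by rewrite ltr0n muln_gt0 !addn_gt0 neg_a pos_a.
rewrite [O _ _ _ _ _]/= !Ghat0E ltr_pM2r ?invr_gt0 // ltr_nat.
exact: auc_optimal_step (IHi j.+1) IHj.
Qed.

End XOrder.

Theorem theorem1 (R : realFieldType) (ya yb : seq bool) :
  (0 < n1a ya)%N -> (0 < n0a ya)%N -> (0 < n1b yb)%N -> (0 < n0b yb)%N ->
  is_cross ya yb (xOrder ya yb (0 : R)) /\
  (forall o : seq inst, is_cross ya yb o ->
     AUC R ya yb o <= AUC R ya yb (xOrder ya yb (0 : R))).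
Proof.
move=> pos_a neg_a pos_b neg_b.
have [cross_xOrder xOrder_max] :=
  O_auc_optimal R pos_a neg_a pos_b neg_b (na ya) (nb yb).
split=> [|o cross_o]; first exact: cross_xOrder.
rewrite /AUC !npairsE -[pairs _ o]/(pairs (wpos ya yb) o).
rewrite -[pairs _ (xOrder _ _ _)]/(pairs (wpos ya yb) (xOrder ya yb (0 : R))).
by rewrite ler_wpM2r ?invr_ge0 ?ler0n // ler_nat xOrder_max.
Qed.
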